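(* Let $P_1,\ldots,P_d$ be real-valued random variables (test statistics, not necessarily $p$-values) associated with null hypotheses $H_1,\ldots,H_d$, and let $I_0\subseteq\{1,\ldots,d\}$ be the index set of true null hypotheses. Fix $\tilde\alpha\in(0,1)$ and consider the step-up procedure based on $P_1,\ldots,P_d$ with critical constants $\alpha_i=i\tilde\alpha/d$, $i=1,\ldots,d$. Fix $c\in(\tilde\alpha,1]$ and a subset $\mathcal S\subseteq I_0$, and assume: (1) for each $i\in I_0\setminus\mathcal S$, $P_i$ is PLTDN on $\boldsymbol P_{-i}$ over $(0,c)$; (2) for each $i\in\mathcal S$ there is a random variable $\hat P_i$ such that, conditionally on $\boldsymbol P_{-i}$, $\hat P_i$ is a nondecreasing function of $P_i$ and is stochastically smaller than $P_i$, i.e. almost surely $\Pr(P_i\le u\mid \boldsymbol P_{-i})\le \Pr(\hat P_i\le u\mid \boldsymbol P_{-i})$ for all $u\in(0,c)$; and $\hat P_i$ is PLTDN on $\boldsymbol P_{-i}$ over $(0,c)$. Then the false discovery rate of this step-up procedure satisfies $$\mathrm{FDR}\le \sum_{i\in I_0\setminus\mathcal S}\Pr\big(P_i\le \tilde\alpha/d\big)+\sum_{i\in \mathcal S}\Pr\big(\hat P_i\le \tilde\alpha/d\big).$$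
   Context: Step-up procedure with critical constants $\alpha_1\le\cdots\le\alpha_d$: order the statistics as $P_{(1)}\le\cdots\le P_{(d)}$, let $R=\max\{i: P_{(i)}\le\alpha_i\}$, and reject $H_i$ for all $i$ with $P_i\le P_{(R)}$ if $R$ exists; otherwise reject nothing. The false discovery rate is $\mathrm{FDR}=E[V/\max(R,1)]$, where $V$ is the number of rejected true nulls and $R$ the number of rejections. $\boldsymbol P_{-i}$ denotes the vector $(P_1,\ldots,P_d)$ with the $i$-th coordinate removed. PLTDN (positive left-tail dependence under the null): for $i\in I_0$ and $c\in(0,1]$, a random variable $Q$ is said to be PLTDN on $\boldsymbol P_{-i}$ over $(0,c)$ if either (a) $u\mapsto \Pr(Q\le u\mid\boldsymbol P_{-i})/u$ is (almost surely) nonincreasing on $(0,c)$; or (b) for every coordinatewise nondecreasing function $g$ of $\boldsymbol P_{-i}$ and every fixed constant $t$ (with $\Pr(g(\boldsymbol P_{-i})\le t)>0$), $u\mapsto\Pr(Q\le u\mid g(\boldsymbol P_{-i})\le t)/u$ is nonincreasing on $(0,c)$. *)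

From HB Require Import structures.
From mathcomp Require Import all_boot all_order all_algebra.
From mathcomp Require Import all_classical all_reals all_analysis.
Set Implicit Arguments. Unset Strict Implicit. Unset Printing Implicit Defensive.
Import Order.TTheory GRing.Theory Num.Theory.
Local Open Scope classical_set_scope.
Local Open Scope ring_scope.

Definition sigma_minus {d} {T : measurableType d} {R : realType} {n : nat}
  (X : 'I_n -> T -> R) (i : 'I_n) : set (set T) :=
  <<s [set A | exists2 j : 'I_n, j != i &
               exists2 B : set R, measurable B & A = X j @^-1` B] >>.

Definition cond_prob_version {d} {T : measurableType d} {R : realType}
  (P : probability T R) (G : set (set T)) (E : set T) (f : T -> R) : Prop :=
  [/\ (forall B : set R, measurable B -> G (f @^-1` B)),
      P.-integrable setT (EFin \o f) &
      (forall A, G A -> (\int[P]_(x in A) (f x)%:E = P (E `&` A))%E)].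

(* the vector P_{-i}, represented as an element of R^n whose i-th
   coordinate is set to 0 *)
Definition minus_vec {T} {R : realType} {n : nat} (X : 'I_n -> T -> R)
  (i : 'I_n) (x : T) : 'I_n -> R := fun j => if j == i then 0 else X j x.

Definition PLTDN_a {d} {T : measurableType d} {R : realType} {n : nat}
  (P : probability T R) (X : 'I_n -> T -> R) (i : 'I_n) (Q : T -> R) (c : R)
  : Prop :=
  exists k : R -> T -> R,
    (forall u, 0 < u < c ->
       cond_prob_version P (sigma_minus X i) [set x | Q x <= u] (k u)) /\
    {ae P, forall x, forall u v, 0 < u -> u <= v -> v < c ->
                     k v x / v <= k u x / u}.

Definition PLTDN_b {d} {T : measurableType d} {R : realType} {n : nat}
  (P : probability T R) (X : 'I_n -> T -> R) (i : 'I_n) (Q : T -> R) (c : R)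
  : Prop :=
  forall (g : ('I_n -> R) -> R) (t : R),
    (forall v w : 'I_n -> R, (forall j, v j <= w j) -> g v <= g w) ->
    let E := [set x | g (minus_vec X i x) <= t] in
    measurable E -> (0 < P E)%E ->
    forall u v, 0 < u -> u <= v -> v < c ->
      fine (P ([set x | Q x <= v] `&` E)) / fine (P E) / v <=
      fine (P ([set x | Q x <= u] `&` E)) / fine (P E) / u.

Definition PLTDN {d} {T : measurableType d} {R : realType} {n : nat}
  (P : probability T R) (X : 'I_n -> T -> R) (i : 'I_n) (Q : T -> R) (c : R)
  : Prop := PLTDN_a P X i Q c \/ PLTDN_b P X i Q c.

(* order statistics P_(1) <= ... <= P_(n) (0-indexed list) *)
Definition order_stats {T} {R : realType} {n : nat} (X : 'I_n -> T -> R)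
  (x : T) : seq R := sort <=%R [seq X j x | j <- enum 'I_n].

(* R = max{ k in 1..n : P_(k) <= alpha_k }, 0 if no such k *)
Definition stepup_index {T} {R : realType} {n : nat} (alpha : nat -> R)
  (X : 'I_n -> T -> R) (x : T) : nat :=
  \max_(k < n.+1 | (0 < (k : nat))%N &&
                   (nth 0 (order_stats X x) (k : nat).-1 <= alpha k)) (k : nat).

Definition stepup_rejected {T} {R : realType} {n : nat} (alpha : nat -> R)
  (X : 'I_n -> T -> R) (x : T) : {set 'I_n} :=
  if (0 < stepup_index alpha X x)%N then
    [set j | X j x <= nth 0 (order_stats X x) (stepup_index alpha X x).-1]%SET
  else finset.set0.

Definition FDP {T} {R : realType} {n : nat} (I0 : {set 'I_n})
  (alpha : nat -> R) (X : 'I_n -> T -> R) (x : T) : R :=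
  (#|stepup_rejected alpha X x :&: I0|)%:R /
  (maxn #|stepup_rejected alpha X x| 1)%:R.

Definition FDR {d} {T : measurableType d} {R : realType} {n : nat}
  (P : probability T R) (I0 : {set 'I_n}) (alpha : nat -> R)
  (X : 'I_n -> T -> R) : \bar R :=
  (\int[P]_x (FDP I0 alpha X x)%:E)%E.

From HB Require Import structures.
From mathcomp Require Import all_boot all_order all_algebra.
From mathcomp Require Import all_classical all_reals all_analysis.
From mathcomp Require Import measurable_realfun lra.
Set Implicit Arguments. Unset Strict Implicit. Unset Printing Implicit Defensive.
Import Order.TTheory GRing.Theory Num.Theory.
Local Open Scope classical_set_scope.
Local Open Scope ring_scope.

(* Leave-one-out: H_i is rejected iff P_i <= alpha_k for k = R^(i), the number
   of rejections once P_i is replaced by -oo, and then exactly k hypotheses are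
   rejected.  Hence FDR = sum_(i in I0) sum_k Pr(P_i <= alpha_k, R^(i) = k) / k.
   R^(i) is a nonincreasing function of P_(-i), so {R^(i) >= k} is an event of
   the form {g(P_(-i)) <= t} with g nondecreasing, and PLTDN gives
   Pr(Q <= alpha_(k+1), R^(i) >= k+1) / (k+1) <= Pr(Q <= alpha_k, R^(i) >= k+1) / k;
   summing by parts bounds the inner sum by Pr(Q <= alpha_1).  For i in S the
   conditional stochastic ordering first replaces P_i by Phat_i, since the events
   {R^(i) = k} are P_(-i)-measurable. *)

Lemma count_enum_ord (n : nat) (p : pred 'I_n) :
  count p (enum 'I_n) = #|[set j | p j]%SET|.
Proof.
rewrite cardE -size_filter /enum_mem; congr size.
by rewrite -filter_predI; apply: eq_filter => x /=; rewrite [RHS]inE andbT.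
Qed.

Lemma sorted_nth_leE (R : realType) (t : seq R) k a :
  sorted <=%R t -> (k < size t)%N ->
  (nth 0 t k <= a) = (k < count (<= a) t)%N.
Proof.
move=> st kt.
have nth_mono i j : (i <= j)%N -> (j < size t)%N -> nth 0 t i <= nth 0 t j.
  move=> ij jt; apply: (sorted_leq_nth le_trans lexx 0 st) => //.
  by rewrite inE (leq_ltn_trans ij jt).
rewrite -{2}(cat_take_drop k.+1 t) count_cat.
have [tka|atk] := leP (nth 0 t k) a.
- have : all (<= a) (take k.+1 t).
    apply/(all_nthP 0) => j; rewrite (size_takel kt) => jk.
    by rewrite nth_take //= (le_trans _ tka) // nth_mono.
  by rewrite all_count (size_takel kt) => /eqP->; rewrite ltnS leq_addr.
- have -> : count (<= a) (drop k.+1 t) = 0%N.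
    apply/eqP; rewrite -leqn0 leqNgt -has_count; apply/negP => /(has_nthP 0)[j].
    rewrite size_drop nth_drop => jt; rewrite /= leNgt => /negP; apply.
    apply: (lt_le_trans atk); apply: nth_mono.
      by rewrite addSn ltnW // ltnS leq_addr.
    by rewrite -ltn_subRL.
  rewrite addn0 (take_nth 0 kt) -cats1 count_cat /= leNgt atk /= !addn0.
  rewrite ltnNge (leq_trans (count_size _ _)) // size_take.
  by case: ifP => // /negbT; rewrite -leqNgt.
Qed.

(* The largest k <= n with k <= f k, or 0; with f k the number of statistics
   below alpha_k this is the step-up index, see [stepup_indexE]. *)
Definition stepup (n : nat) (f : nat -> nat) : nat :=
  \max_(k < n.+1 | (0 < k)%N && (k <= f k)%N) (k : nat).

Section Stepup.
Variables (n : nat) (f : nat -> nat).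

Lemma stepup_le : (stepup n f <= n)%N.
Proof. by apply/bigmax_leqP => k _; rewrite -ltnS. Qed.

Lemma leq_stepup k : (0 < k)%N -> (k <= n)%N -> (k <= f k)%N -> (k <= stepup n f)%N.
Proof.
move=> k0 kn kf; have kn1 : (k < n.+1)%N by [].
apply: (@leq_bigmax_cond _ _ (fun j : 'I_n.+1 => nat_of_ord j) (Ordinal kn1)).
by rewrite /= k0.
Qed.

Lemma stepup_cases :
  stepup n f = 0%N \/ (0 < stepup n f)%N /\ (stepup n f <= f (stepup n f))%N.
Proof.
apply: (big_ind (fun m => m = 0%N \/ (0 < m)%N /\ (m <= f m)%N)).
- by left.
- move=> a b [->|fa] [->|fb]; rewrite ?max0n ?maxn0; [by left|by right|by right|].
  by right; case: (leqP a b).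
- by move=> k /andP; right.
Qed.

End Stepup.

Lemma stepup_homo n (f g : nat -> nat) :
  (forall k, (f k <= g k)%N) -> (stepup n f <= stepup n g)%N.
Proof.
move=> fg; apply/bigmax_leqP => k /andP[k0 kf].
apply: (@leq_bigmax_cond _ _ (fun j : 'I_n.+1 => nat_of_ord j) k).
by rewrite k0 (leq_trans kf).
Qed.

Section StepupProcedure.
Variables (R : realType) (n : nat) (alpha : nat -> R).
Hypothesis alpha_homo : {homo alpha : a b / (a <= b)%N >-> a <= b}.

Definition card_le (w : 'I_n -> R) (a : R) := #|[set j | w j <= a]%SET|.

Definition card_le_off (i : 'I_n) (w : 'I_n -> R) (a : R) :=
  #|[set j | (j != i) && (w j <= a)]%SET|.

(* The number of rejections of the step-up procedure once P_i is replaced by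
   -oo; it only depends on P_{-i}. *)
Definition loo_index (i : 'I_n) (w : 'I_n -> R) : nat :=
  stepup n (fun k => (card_le_off i w (alpha k)).+1).

Lemma card_le_homo w : {homo card_le w : a b / a <= b >-> (a <= b)%N}.
Proof.
move=> a b ab; apply/subset_leq_card/fintype.subsetP => j; rewrite !inE.
by move/le_trans; apply.
Qed.

Lemma card_le_off_homo i w : {homo card_le_off i w : a b / a <= b >-> (a <= b)%N}.
Proof.
move=> a b ab; apply/subset_leq_card/fintype.subsetP => j; rewrite !inE.
by case/andP=> -> /le_trans; apply.
Qed.

Lemma card_le_ub w a : (card_le w a <= n)%N.
Proof. by rewrite -[X in (_ <= X)%N]card_ord max_card. Qed.

Lemma card_leD1 w i a : card_le w a = ((w i <= a)%R + card_le_off i w a)%N.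
Proof.
rewrite /card_le (cardD1 i) inE; congr (_ + _)%N.
by apply: eq_card => j; rewrite !inE.
Qed.

Lemma loo_index_antihomo i v w : (forall j, v j <= w j) -> (loo_index i w <= loo_index i v)%N.
Proof.
move=> vw; apply: stepup_homo => k; rewrite ltnS; apply/subset_leq_card.
by apply/fintype.subsetP => j; rewrite !inE => /andP[-> /(le_trans (vw j))].
Qed.

Lemma loo_index_cases i w : loo_index i w = 0%N \/
  (0 < loo_index i w)%N /\ (loo_index i w <= (card_le_off i w (alpha (loo_index i w))).+1)%N.
Proof. exact: stepup_cases. Qed.

Section Outcome.
Variables (T : Type) (X : 'I_n -> T -> R) (x : T).

Let v j := X j x.
Let r := stepup_index alpha X x.
Let p := nth 0 (order_stats X x) r.-1.
Local Notation ri i := (loo_index i (minus_vec X i x)).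

Lemma count_order_stats a : count (<= a) (order_stats X x) = card_le v a.
Proof.
by rewrite (permP (permEl (perm_sort <=%R _))) /= count_map count_enum_ord.
Qed.

Lemma order_stats_leE k a : (0 < k <= n)%N ->
  (nth 0 (order_stats X x) k.-1 <= a) = (k <= card_le v a)%N.
Proof.
case/andP=> k0 kn; rewrite sorted_nth_leE.
- by rewrite prednK // count_order_stats.
- exact/sort_sorted/le_total.
- by rewrite size_sort size_map size_enum_ord prednK.
Qed.

Lemma stepup_indexE : r = stepup n (fun k => card_le v (alpha k)).
Proof.
apply: eq_bigl => k; case: (posnP k) => [->//|k0] /=.
by rewrite order_stats_leE // k0 -ltnS ltn_ord.
Qed.

Lemma stepup_threshold : (0 < r)%N -> p <= alpha r /\ (r <= card_le v p)%N.
Proof.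
move=> r0; have r0n : (0 < r <= n)%N by rewrite r0 stepup_indexE stepup_le.
split; last by rewrite -order_stats_leE.
rewrite order_stats_leE //.
by case: (stepup_cases n (fun k => card_le v (alpha k))); rewrite -stepup_indexE -/r;
  [move=> r00; rewrite r00 in r0 | case].
Qed.

Lemma stepup_index_cases : r = 0%N \/ (0 < r)%N /\ (r <= card_le v (alpha r))%N.
Proof. by rewrite stepup_indexE; apply: stepup_cases. Qed.

Lemma leq_stepup_index k : (0 < k)%N -> (k <= card_le v (alpha k))%N -> (k <= r)%N.
Proof.
move=> k0 kc; rewrite stepup_indexE; apply: leq_stepup => //.
exact: leq_trans kc (card_le_ub _ _).
Qed.

Lemma card_le_minus_vec i a :
  card_le v a = ((v i <= a)%R + card_le_off i (minus_vec X i x) a)%N.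
Proof.
rewrite (card_leD1 _ i); congr (_ + _)%N.
by apply: eq_card => j; rewrite !inE /minus_vec; case: eqP.
Qed.

Lemma stepup_index_le_loo i : (r <= ri i)%N.
Proof.
have [->//|[r0 rc]] := stepup_index_cases.
apply: leq_stepup => //; first by rewrite stepup_indexE stepup_le.
by rewrite -add1n (leq_trans rc) // (card_le_minus_vec i) leq_add2r leq_b1.
Qed.

Lemma card_stepup_rejected : (0 < r)%N -> #|stepup_rejected alpha X x| = r.
Proof.
move=> r0; rewrite /stepup_rejected -/r r0 -/p.
have [pa rc] := stepup_threshold r0.
apply/eqP; rewrite eqn_leq rc andbT leqNgt; apply/negP => r_lt_c.
suff : (r.+1 <= r)%N by rewrite ltnn.
apply: leq_stepup_index => //; apply: (leq_trans r_lt_c); apply: card_le_homo.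
exact: le_trans pa (alpha_homo (leqnSn r)).
Qed.

Lemma stepup_rejected_loo i :
  i \in stepup_rejected alpha X x -> [/\ (0 < r)%N, v i <= alpha r & ri i = r].
Proof.
rewrite /stepup_rejected -/r; case: (posnP r) => [->|r0]; first by rewrite inE.
rewrite -/p inE => vip; have [pa _] := stepup_threshold r0.
have via : v i <= alpha r := le_trans vip pa.
split => //; apply/eqP; rewrite eqn_leq stepup_index_le_loo andbT.
have [->//|[ri0 ric]] := loo_index_cases i (minus_vec X i x).
apply: leq_stepup_index => //; rewrite (card_le_minus_vec i).
by rewrite (le_trans via (alpha_homo (stepup_index_le_loo i))).
Qed.

Lemma loo_stepup_rejected i : (0 < ri i)%N -> v i <= alpha (ri i) ->
  i \in stepup_rejected alpha X x.
Proof.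
move=> k0 vik; set k := ri i in k0 vik.
have kc : (k <= card_le v (alpha k))%N.
  have [k00|[_ kc]] := loo_index_cases i (minus_vec X i x); first by rewrite /k k00 in k0.
  by rewrite (card_le_minus_vec i) vik add1n; exact: kc.
have rk : r = k.
  by apply/eqP; rewrite eqn_leq stepup_index_le_loo leq_stepup_index.
have r0 : (0 < r)%N by rewrite rk.
rewrite /stepup_rejected -/r r0 -/p inE leNgt; apply/negP => pv.
have [pa rc] := stepup_threshold r0.
have k_lt_c : (k < card_le v (alpha k))%N.
  rewrite (card_le_minus_vec i) vik add1n ltnS -rk (leq_trans rc) //.
  by rewrite (card_le_minus_vec i) (lt_geF pv) add0n card_le_off_homo // -rk.
suff : (k.+1 <= r)%N by rewrite rk ltnn.
apply: leq_stepup_index => //; apply: (leq_trans k_lt_c); apply: card_le_homo.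
exact: alpha_homo.
Qed.

Lemma FDP_loo_decomp (I0 : {set 'I_n}) : FDP I0 alpha X x =
  \sum_(i in I0) \sum_(k < n) ((v i <= alpha k.+1) && (ri i == k.+1))%:R / k.+1%:R.
Proof.
rewrite /FDP.
have -> : (#|stepup_rejected alpha X x :&: I0|)%:R =
    \sum_(i in I0) ((i \in stepup_rejected alpha X x)%:R : R).
  rewrite -sum1_card natr_sum big_mkcond [RHS]big_mkcond; apply: eq_bigr => j _.
  by rewrite inE; case: (j \in stepup_rejected _ _ _); case: (j \in I0).
rewrite mulr_suml; apply: eq_bigr => i _.
have [rej|nrej] := boolP (i \in stepup_rejected alpha X x).
- have [r0 via rir] := stepup_rejected_loo rej.
  have r1n : (r.-1 < n)%N by rewrite prednK // stepup_indexE stepup_le.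
  rewrite (card_stepup_rejected r0) (maxn_idPl r0) mul1r.
  rewrite (bigD1 (Ordinal r1n)) //= prednK // via rir eqxx mul1r big1 ?addr0 //.
  move=> k /eqP kr; rewrite [X in (_ && X)%:R](_ : _ = false) ?andbF ?mul0r //.
  by apply/negbTE/eqP => rk; apply: kr; apply: val_inj; rewrite /= rk.
- rewrite mul0r big1 // => k _; case: andP => [[vik /eqP rik]|_]; last by rewrite mul0r.
  by move: nrej; rewrite loo_stepup_rejected // rik.
Qed.
End Outcome.
End StepupProcedure.

Lemma sum_div_le_telescope (R : realFieldType) (n : nat) (a : nat -> R)
    (p : nat -> nat -> R) :
  0 <= p 1%N 1%N ->
  (forall k, (0 < k <= n)%N -> a k <= p k k - p k k.+1) ->
  (forall m, (0 < m < n)%N -> p m.+1 m.+1 / m.+1%:R <= p m m.+1 / m%:R) ->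
  p n n.+1 = 0 ->
  \sum_(k < n) a k.+1 / k.+1%:R <= p 1%N 1%N.
Proof.
case: n => [p0 _ _ _|n p0 ha hp hn]; first by rewrite big_ord0.
suff partial N : (0 < N <= n.+1)%N ->
    \sum_(k < N) a k.+1 / k.+1%:R <= p 1%N 1%N - p N N.+1 / N%:R.
  by have := partial n.+1 (leqnn _); rewrite hn mul0r subr0.
elim: N => [//|[|N] IH] /andP[_ NN]; first by rewrite big_ord1 !divr1; exact: ha.
rewrite big_ord_recr /=.
have IHN := IH (ltnW NN).
have aN : a N.+2 / N.+2%:R <= p N.+2 N.+2 / N.+2%:R - p N.+2 N.+3 / N.+2%:R.
  by rewrite -mulrBl ler_wpM2r ?invr_ge0 // ha.
move: IHN aN (hp N.+1 NN).
set s := \sum_(_ < _) _; set A := a _ / _; set B := p N.+2 N.+2 / _.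
set C := p N.+2 N.+3 / _; set D := p N.+1 N.+2 / _.
lra.
Qed.

Lemma measurable_finset_preimage d (T : measurableType d) (J : finType)
    (b : J -> T -> bool) (phi : pred {set J}) :
  (forall j, measurable [set x | b j x]) -> measurable [set x | phi [set j | b j x]%SET].
Proof.
move=> mb.
have -> : [set x | phi [set j | b j x]%SET] =
    \bigcup_(S in [set S | phi S]) \bigcap_(j in [set: J]) [set x | b j x = (j \in S)].
  apply/seteqP; split => [x phix|x [S /= phiS hS]].
    by exists [set j | b j x]%SET => // j _ /=; rewrite inE.
  suff -> : [set j | b j x]%SET = S by [].
  by apply/setP => j; rewrite inE hS.
apply: fin_bigcup_measurable => [|S _]; first exact: finite_finset.
apply: fin_bigcap_measurable => [|j _]; first exact: finite_finset.
case: (j \in S); first exact: mb.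
have -> : [set x | b j x = false] = ~` [set x | b j x].
  by apply/seteqP; split => x /=; [move->|move/negP/negbTE].
exact/measurableC/mb.
Qed.

Lemma measurable_lev d (T : measurableType d) (R : realType) (f : T -> R) a :
  measurable_fun setT f -> measurable [set x | f x <= a].
Proof.
move=> mf; rewrite -[X in measurable X]setTI.
by apply: measurable_fun_le => //; exact: measurable_cst.
Qed.

Section LooEvents.
Context d (T : measurableType d) (R : realType) (n : nat).
Variables (X : 'I_n -> T -> R) (alpha : nat -> R).
Hypothesis mX : forall j, measurable_fun setT (X j).

Local Notation loo i x := (loo_index alpha i (minus_vec X i x)).

Lemma sigma_minus_measurable i A : sigma_minus X i A -> measurable A.
Proof.
apply: smallest_sub; first exact: sigma_algebra_measurable.
by move=> _ [j _ [B mB ->]]; rewrite -[_ @^-1` _]setTI; exact: mX.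
Qed.

Lemma sigma_minus_lev i j a : j != i -> sigma_minus X i [set x | X j x <= a].
Proof.
move=> ji; apply: sub_sigma_algebra; exists j => //.
exists `]-oo, a]%classic; first exact: measurable_itv.
by apply/seteqP; split => x /=; rewrite in_itv.
Qed.

Lemma sigma_minus_loo_index i (phi : pred nat) : sigma_minus X i [set x | phi (loo i x)].
Proof.
(* [loo i x] only depends on which events {X j <= alpha k}, j != i, k <= n, occur. *)
pose b (jk : 'I_n * 'I_n.+1) x := (jk.1 != i) && (X jk.1 x <= alpha jk.2).
pose Phi (S : {set 'I_n * 'I_n.+1}) :=
  phi (stepup n (fun k => #|[set j | (j, inord k) \in S]%SET|.+1)).
have -> : [set x | phi (loo i x)] = [set x | Phi [set jk | b jk x]%SET].
  apply: eq_set => x; congr phi; apply: eq_bigl => k /=.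
  congr (_ && (_ <= _.+1)%N); apply: eq_card => j.
  by rewrite !inE /b /= inord_val /minus_vec; case: eqP.
have bG jk : sigma_minus X i [set x | b jk x].
  have [ji|ji] := eqVneq jk.1 i; last by rewrite /b ji; exact: sigma_minus_lev.
  rewrite [X in _ X](_ : _ = set0); last by apply/seteqP; split => x; rewrite /b ji eqxx.
  by rewrite /sigma_minus; exact: sigma_algebra0.
(* [sigma_minus X i] is the measurable structure of [g_sigma_algebraType G]. *)
rewrite /sigma_minus; set G := (X in <<s X >>).
exact: (@measurable_finset_preimage _ (g_sigma_algebraType G) _ b Phi bG).
Qed.

End LooEvents.
Arguments sigma_minus_lev {d T R n X i j a}.
Arguments sigma_minus_loo_index {d T R n X} alpha i phi.

Section Probability.
Context d (T : measurableType d) (R : realType) (P : probability T R).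

Lemma probability_fineK (A : set T) : measurable A -> ((fine (P A))%:E = P A)%E.
Proof. by move=> mA; rewrite fineK // fin_num_measure. Qed.

Lemma ae_le_integral (B : set T) (f g : T -> R) : measurable B ->
  P.-integrable setT (EFin \o f) -> P.-integrable setT (EFin \o g) ->
  {ae P, forall x, f x <= g x} ->
  (\int[P]_(x in B) (f x)%:E <= \int[P]_(x in B) (g x)%:E)%E.
Proof.
move=> mB intf intg [N [mN PN fgN]].
have intfB := integrableS measurableT mB (@subsetT _ B) intf.
have intgB := integrableS measurableT mB (@subsetT _ B) intg.
have mBN := measurableD mB mN.
have BNB : B `\` N `<=` B by move=> x [].
rewrite (negligible_integral mN mB intfB PN) (negligible_integral mN mB intgB PN).
apply: (le_integral mBN).
- exact: integrableS mB mBN BNB intfB.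
- exact: integrableS mB mBN BNB intgB.
- move=> x; rewrite inE => -[_ Nx]; rewrite lee_fin.
  by have [//|/negP fgx] := boolP (f x <= g x); case: Nx; exact: fgN.
Qed.

Lemma cond_prob_version_le (G : set (set T)) (E1 E2 A : set T) (f1 f2 : T -> R) :
  cond_prob_version P G E1 f1 -> cond_prob_version P G E2 f2 ->
  {ae P, forall x, f1 x <= f2 x} -> G A -> measurable A ->
  (P (E1 `&` A) <= P (E2 `&` A))%E.
Proof.
move=> [_ int1 h1] [_ int2 h2] f12 GA mA; rewrite -h1 // -h2 //.
exact: ae_le_integral.
Qed.

Lemma integral_sum_indic (I : finType) (A : pred I) (w : I -> R) (E : I -> set T) :
  (forall i, 0 <= w i) -> (forall i, measurable (E i)) ->
  (\int[P]_x (\sum_(i in A) w i * \1_(E i) x)%:E =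
   (\sum_(i in A) w i * fine (P (E i)))%:E)%E.
Proof.
move=> w0 mE; rewrite -sumEFin.
under eq_integral do rewrite -sumEFin -big_enum /=.
rewrite ge0_integral_sum -?big_enum //=.
- apply: eq_bigr => i _; under eq_integral do rewrite EFinM.
  rewrite ge0_integralZl_EFin //; last exact/measurable_EFinP/measurable_indic.
  by rewrite integral_indic // setIT EFinM probability_fineK.
- by move=> i; apply/measurable_EFinP/measurable_funM => //; exact: measurable_indic.
- by move=> i x _; rewrite lee_fin mulr_ge0 // indicE ler0n.
Qed.

End Probability.

Section PLTDN.
Context d (T : measurableType d) (R : realType) (P : probability T R).
Variables (n : nat) (X : 'I_n -> T -> R) (i : 'I_n) (Q : T -> R) (c : R).
Hypotheses (mX : forall j, measurable_fun setT (X j)) (mQ : measurable_fun setT Q).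

Lemma PLTDN_a_ratio (A : set T) u v : PLTDN_a P X i Q c -> sigma_minus X i A ->
  0 < u -> u <= v -> v < c ->
  fine (P ([set x | Q x <= v] `&` A)) / v <= fine (P ([set x | Q x <= u] `&` A)) / u.
Proof.
move=> [k [kP kratio]] GA u0 uv vc.
have v0 := lt_le_trans u0 uv.
have mA := sigma_minus_measurable mX GA.
have [_ intv Ev] := kP v (andb_true_intro (conj v0 vc)).
have [_ intu Eu] := kP u (andb_true_intro (conj u0 (le_lt_trans uv vc))).
have kvu : (\int[P]_(x in A) (k v x)%:E <= \int[P]_(x in A) ((v / u) * k u x)%:E)%E.
  apply: ae_le_integral => //.
    rewrite (_ : _ \o _ = fun x => (v / u)%:E * (EFin \o k u) x)%E.
      exact: integrableZl.
    by apply/funext => x; rewrite /= EFinM.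
  apply: filterS kratio => x /(_ u v u0 uv vc).
  by rewrite ler_pdivrMr // [v / u * _]mulrC mulrA mulrAC.
have intuA := integrableS measurableT mA (@subsetT _ A) intu.
have mQA w : measurable ([set x | Q x <= w] `&` A) := measurableI _ _ (measurable_lev _ mQ) mA.
move: kvu; under [X in (_ <= X)%E]eq_integral do rewrite EFinM.
rewrite integralZl // (Ev A GA) (Eu A GA).
rewrite -(probability_fineK P (mQA v)) -(probability_fineK P (mQA u)) -EFinM lee_fin.
by rewrite ler_pdivrMr // [v / u * _]mulrC mulrA mulrAC.
Qed.

Lemma PLTDN_b_ratio (g : ('I_n -> R) -> R) t u v :
  PLTDN_b P X i Q c -> (forall w w', (forall j, w j <= w' j) -> g w <= g w') ->
  measurable [set x | g (minus_vec X i x) <= t] -> 0 < u -> u <= v -> v < c ->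
  fine (P ([set x | Q x <= v] `&` [set x | g (minus_vec X i x) <= t])) / v <=
  fine (P ([set x | Q x <= u] `&` [set x | g (minus_vec X i x) <= t])) / u.
Proof.
move=> hb ghomo; set B := [set x | _ <= t] => mB u0 uv vc.
have [PB0|PBpos] := leP (P B) 0%E.
  have PQB w : P ([set x | Q x <= w] `&` B) = 0%E.
    apply/eqP; rewrite eq_le measure_ge0 andbT (le_trans _ PB0) //.
    exact: measureIr (measurable_lev _ mQ) mB.
  by rewrite !PQB !mul0r.
have PB_gt0 : 0 < fine (P B).
  by rewrite fine_gt0 // PBpos (le_lt_trans (probability_le1 P mB)) ?ltry.
have := hb g t ghomo mB PBpos u v u0 uv vc.
by rewrite !(mulrAC _ (fine (P B))^-1) ler_pM2r // invr_gt0.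
Qed.

Lemma PLTDN_ratio (g : ('I_n -> R) -> R) t u v :
  PLTDN P X i Q c -> (forall w w', (forall j, w j <= w' j) -> g w <= g w') ->
  sigma_minus X i [set x | g (minus_vec X i x) <= t] -> 0 < u -> u <= v -> v < c ->
  fine (P ([set x | Q x <= v] `&` [set x | g (minus_vec X i x) <= t])) / v <=
  fine (P ([set x | Q x <= u] `&` [set x | g (minus_vec X i x) <= t])) / u.
Proof.
move=> [ha|hb] ghomo GB; first exact: PLTDN_a_ratio.
exact: PLTDN_b_ratio hb ghomo (sigma_minus_measurable mX GB).
Qed.

End PLTDN.

Definition loo_sum d (T : measurableType d) (R : realType) (P : probability T R) n
    (X : 'I_n -> T -> R) (alpha : nat -> R) (i : 'I_n) (Q : T -> R) : R :=
  \sum_(k < n) fine (P ([set x | Q x <= alpha k.+1] `&`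
    [set x | loo_index alpha i (minus_vec X i x) == k.+1])) / k.+1%:R.

Section FDRDecomposition.
Context d (T : measurableType d) (R : realType) (P : probability T R).
Variables (n : nat) (X : 'I_n -> T -> R) (alpha : nat -> R).
Hypotheses (mX : forall j, measurable_fun setT (X j))
  (alpha_homo : {homo alpha : a b / (a <= b)%N >-> a <= b}).

Local Notation loo i x := (loo_index alpha i (minus_vec X i x)).

Lemma measurable_loo_index i (phi : pred nat) : measurable [set x | phi (loo i x)].
Proof. exact (sigma_minus_measurable mX (sigma_minus_loo_index alpha i phi)). Qed.

Lemma FDR_loo_decomp (I0 : {set 'I_n}) :
  FDR P I0 alpha X = (\sum_(i in I0) loo_sum P X alpha i (X i))%:E.
Proof.
pose E (ik : 'I_n * 'I_n) :=
  [set x | X ik.1 x <= alpha ik.2.+1] `&` [set x | loo ik.1 x == ik.2.+1].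
have mE ik : measurable (E ik).
  exact: measurableI (measurable_lev _ (mX _)) (measurable_loo_index _ (pred1 _)).
rewrite /FDR (eq_integral (fun x => (\sum_(ik : 'I_n * 'I_n | (ik.1 \in I0) && true)
    (ik.2.+1%:R)^-1 * \1_(E ik) x)%:E)); last first.
  move=> x _; rewrite (FDP_loo_decomp alpha_homo) pair_big_dep; congr EFin.
  by apply: eq_bigr => -[i k] _; rewrite indicE mulrC /E /= in_setI !mem_setE.
rewrite integral_sum_indic //.
rewrite /loo_sum pair_big_dep; congr EFin.
by apply: eq_bigr => -[i k] _; rewrite mulrC.
Qed.

End FDRDecomposition.

Section LooBound.
Context d (T : measurableType d) (R : realType) (P : probability T R).
Variables (n : nat) (X : 'I_n -> T -> R) (alpha : nat -> R) (a c : R).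
Hypotheses (mX : forall j, measurable_fun setT (X j)) (a_gt0 : 0 < a)
  (alphaE : forall k, alpha k = k%:R * a) (na_lt_c : n%:R * a < c).

Local Notation loo i x := (loo_index alpha i (minus_vec X i x)).

Lemma alpha_in_range k : (0 < k <= n)%N -> 0 < alpha k < c.
Proof.
case/andP=> k0 kn; rewrite alphaE mulr_gt0 ?ltr0n //= (le_lt_trans _ na_lt_c) //.
by rewrite ler_wpM2r ?ler_nat // ltW.
Qed.

Lemma loo_sum_le_cond_stoch i (Q : T -> R) (F G : R -> T -> R) :
  measurable_fun setT Q ->
  (forall u, 0 < u < c -> cond_prob_version P (sigma_minus X i) [set x | X i x <= u] (F u)) ->
  (forall u, 0 < u < c -> cond_prob_version P (sigma_minus X i) [set x | Q x <= u] (G u)) ->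
  {ae P, forall x, forall u, 0 < u < c -> F u x <= G u x} ->
  loo_sum P X alpha i (X i) <= loo_sum P X alpha i Q.
Proof.
move=> mQ condF condG FG; apply: ler_sum => k _; rewrite ler_pM2r ?invr_gt0 ?ltr0n //.
have alpha_k := alpha_in_range (ltn_ord k : 0 < k.+1 <= n)%N.
have mL := measurable_loo_index alpha mX i (pred1 k.+1).
apply: fine_le.
- exact/fin_num_measure/measurableI/mL/measurable_lev/mX.
- exact/fin_num_measure/measurableI/mL/measurable_lev/mQ.
- apply: (cond_prob_version_le (condF _ alpha_k) (condG _ alpha_k)) => //.
    by apply: filterS FG => x; apply.
  exact: (sigma_minus_loo_index alpha i (pred1 k.+1)).
Qed.

Lemma PLTDN_loo_sum_le i (Q : T -> R) : measurable_fun setT Q -> PLTDN P X i Q c ->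
  loo_sum P X alpha i Q <= fine (P [set x | Q x <= alpha 1]).
Proof.
move=> mQ hQ.
pose p u k := fine (P ([set x | Q x <= alpha u] `&` [set x | (k <= loo i x)%N])).
have mQle u : measurable [set x | Q x <= alpha u] := measurable_lev _ mQ.
have mQloo u (phi : pred nat) :
    measurable ([set x | Q x <= alpha u] `&` [set x | phi (loo i x)]).
  exact: measurableI (mQle u) (measurable_loo_index alpha mX i phi).
pose q k := fine (P ([set x | Q x <= alpha k] `&` [set x | loo i x == k])).
apply: le_trans (sum_div_le_telescope (a := q) (p := p) _ _ _ _) _.
- exact/fine_ge0/measure_ge0.
- move=> k _; have mA := mQloo k (pred1 k); have mB := mQloo k (fun m => k < m)%N.
  rewrite lerBrDr /q /p -fineD ?fin_num_measure // -measureU //; last first.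
    by apply/seteqP; split => x // [[_ /eqP lk] [_ /=]]; rewrite lk ltnn.
  rewrite -setIUr (_ : _ `|` _ = [set x | (k <= loo i x)%N]) //.
  apply/seteqP; split => x /=; first by case=> [/eqP->|/ltnW].
  by rewrite leq_eqVlt => /orP[/eqP->|]; [left|right].
- move=> m /andP[m0 mn].
  have /andP[am _] : 0 < alpha m < c by apply: alpha_in_range; rewrite m0 ltnW.
  have /andP[_ amc] : 0 < alpha m.+1 < c by apply: alpha_in_range; exact: mn.
  have amm : alpha m <= alpha m.+1 by rewrite !alphaE ler_wpM2r ?ler_nat // ltW.
  have g_homo w w' : (forall j, w j <= w' j) ->
      - (loo_index alpha i w)%:R <= - (loo_index alpha i w')%:R :> R.
    by move=> ww'; rewrite lerN2 ler_nat; exact: loo_index_antihomo.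
  have := PLTDN_ratio mX mQ hQ g_homo
    (sigma_minus_loo_index alpha i (fun k => - k%:R <= - m.+1%:R)) am amm amc.
  rewrite (_ : [set x | _ <= - m.+1%:R] = [set x | (m.+1 <= loo i x)%N]); last first.
    by apply/eq_set => x; rewrite lerN2 ler_nat.
  by rewrite /p !alphaE !invfM !mulrA ler_pM2r ?invr_gt0.
- rewrite /p (_ : [set x | (n.+1 <= loo i x)%N] = set0) ?setI0 ?measure0 //.
  by apply/seteqP; split => x //=; rewrite ltnNge stepup_le.
- apply: fine_le; rewrite ?fin_num_measure //.
  by apply: measureIl; [exact: mQle | exact: measurable_loo_index alpha mX i (leq 1)].
Qed.

End LooBound.

Theorem theorem1 (d : measure_display) (T : measurableType d) (R : realType)
  (P : probability T R) (n : nat) (X Phat : 'I_n -> T -> R)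
  (I0 S : {set 'I_n}) (atil c : R) :
  (forall j, measurable_fun setT (X j)) ->
  (forall j, j \in S -> measurable_fun setT (Phat j)) ->
  0 < atil < 1 -> atil < c <= 1 -> S \subset I0 ->
  (forall i, i \in I0 :\: S -> PLTDN P X i (X i) c) ->
  (forall i, i \in S ->
     [/\ (exists h : ('I_n -> R) -> R -> R,
            (forall v a b, a <= b -> h v a <= h v b) /\
            {ae P, forall x, Phat i x = h (minus_vec X i x) (X i x)}),
         (exists F G : R -> T -> R,
            [/\ forall u, 0 < u < c ->
                  cond_prob_version P (sigma_minus X i) [set x | X i x <= u] (F u),
                forall u, 0 < u < c ->
                  cond_prob_version P (sigma_minus X i) [set x | Phat i x <= u] (G u)
              & {ae P, forall x, forall u, 0 < u < c -> F u x <= G u x}])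
       & PLTDN P X i (Phat i) c]) ->
  (FDR P I0 (fun k => (k%:R * atil / n%:R)%R) X <=
     \sum_(i in I0 :\: S) P [set x | (X i x <= atil / n%:R)%R] +
     \sum_(i in S) P [set x | (Phat i x <= atil / n%:R)%R])%E.
Proof.
move=> mX mPhat /andP[atil_gt0 _] /andP[atil_lt_c _] SI0 hI0S hS.
set alpha := fun k : nat => _; set a := atil / n%:R.
have alphaE k : alpha k = k%:R * a by rewrite /alpha /a mulrA.
have alpha1 : a = alpha 1%N by rewrite alphaE mul1r.
have alpha_homo : {homo alpha : k l / (k <= l)%N >-> k <= l}.
  by move=> k l kl; rewrite !alphaE ler_wpM2r ?ler_nat // divr_ge0 // ltW.
have a_bounds (i : 'I_n) : 0 < a /\ n%:R * a < c.
  have n_gt0 : 0 < n%:R :> R by rewrite ltr0n (leq_ltn_trans _ (ltn_ord i)).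
  by rewrite /a divr_gt0 // mulrCA divff ?mulr1 // gt_eqF.
have Pfine (f : T -> R) u : measurable_fun setT f ->
    P [set x | f x <= u] = (fine (P [set x | f x <= u]))%:E.
  by move=> mf; rewrite probability_fineK //; exact: measurable_lev.
rewrite FDR_loo_decomp // (eq_bigr _ (fun i _ => Pfine _ _ (mX i))).
rewrite (eq_bigr _ (fun i iS => Pfine _ _ (mPhat i iS))) !sumEFin -EFinD lee_fin.
rewrite (big_setID S) (finset.setIidPr SI0) [leLHS]addrC alpha1.
apply: lerD; apply: ler_sum => i iS; have [a_gt0 na_lt_c] := a_bounds i.
- exact (PLTDN_loo_sum_le mX a_gt0 alphaE na_lt_c (mX i) (hI0S i iS)).
-
  have [_ [F [G [condF condG FG]]] pltdn] := hS i iS.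
  apply: le_trans (PLTDN_loo_sum_le mX a_gt0 alphaE na_lt_c (mPhat i iS) pltdn).
  exact (loo_sum_le_cond_stoch mX a_gt0 alphaE na_lt_c (mPhat i iS) condF condG FG).
Qed.
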